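(* Let $R$ be a (unital, not necessarily associative) ring, let $\sigma\colon R\to R$ be an additive surjection with $\sigma(1)=1$, and let $\delta\colon R\to R$ be an additive map with $\delta(1)=0$. If $R$ is right Noetherian, then the non-associative Ore extension $R[X;\sigma,\delta]$ is right Noetherian.
   Context: A right ideal of a non-associative ring $S$ is an additive subgroup $I$ with $Is\subseteq I$ for all $s\in S$; $S$ is right Noetherian if it satisfies the ascending chain condition on right ideals. For a non-associative ring $R$ and additive maps $\sigma,\delta\colon R\to R$ with $\sigma(1)=1$, $\delta(1)=0$, the non-associative Ore extension $R[X;\sigma,\delta]$ is the additive group of formal sums $\sum_{i\in\mathbb{N}} r_iX^i$ ($r_i\in R$, finitely many non-zero) with pointwise addition and multiplication the biadditive extension of $(rX^m)(sX^n)=\sum_{i\in\mathbb{N}}(r\pi_i^m(s))X^{i+n}$ for $r,s\in R$, $m,n\in\mathbb{N}$, where $\pi_i^m$ is the sum of all $\binom{m}{i}$ compositions of $i$ copies of $\sigma$ and $m-i$ copies of $\delta$, and $\pi_i^m=0$ if $i>m$. *)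

From mathcomp Require Import all_boot all_algebra.
Set Implicit Arguments. Unset Strict Implicit. Unset Printing Implicit Defensive.
Import GRing.Theory.
Local Open Scope ring_scope.

Definition is_naring (S : Type) (zero one : S) (add : S -> S -> S) (opp : S -> S)
  (mul : S -> S -> S) : Prop :=
  (forall x y z, add x (add y z) = add (add x y) z) /\
  (forall x y, add x y = add y x) /\
  (forall x, add zero x = x) /\
  (forall x, add (opp x) x = zero) /\
  (forall x y z, mul x (add y z) = add (mul x y) (mul x z)) /\
  (forall x y z, mul (add x y) z = add (mul x z) (mul y z)) /\
  (forall x, mul one x = x) /\
  (forall x, mul x one = x).

Definition right_ideal (S : Type) (zero : S) (add : S -> S -> S) (opp : S -> S)
  (mul : S -> S -> S) (I : S -> Prop) : Prop :=
  I zero /\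
  (forall x y, I x -> I y -> I (add x y)) /\
  (forall x, I x -> I (opp x)) /\
  (forall x s, I x -> I (mul x s)).

Definition right_noetherian (S : Type) (zero : S) (add : S -> S -> S) (opp : S -> S)
  (mul : S -> S -> S) : Prop :=
  forall I : nat -> S -> Prop,
    (forall n, right_ideal zero add opp mul (I n)) ->
    (forall n x, I n x -> I n.+1 x) ->
    exists N, forall n, (N <= n)%N -> forall x, I n x <-> I N x.

Section Ore.
Variable R : zmodType.

Fixpoint trim (s : seq R) : seq R :=
  match s with
  | [::] => [::]
  | x :: s' => let t := trim s' in
               if (t == [::]) && (x == 0) then [::] else x :: t
  end.

Lemma trim_wf (s : seq R) : (trim s == [::]) || (last 0 (trim s) != 0).
Proof.
elim: s => [|x s IH] //=.
case: ifP => [_|]; first by [].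
case E: (trim s) IH => [|y t] IH /=.
  by move=> ->.
by move=> _; case/orP: IH.
Qed.

(* formal sums sum_i r_i X^i, i.e. finitely supported coefficient sequences,
   stored canonically (no trailing zeros) *)
Record opoly := OPoly { ocoefs : seq R;
                        ocoefs_wf : (ocoefs == [::]) || (last 0 ocoefs != 0) }.

Definition mkop (s : seq R) : opoly := @OPoly (trim s) (trim_wf s).

Definition ocoef (p : opoly) (i : nat) : R := nth 0 (ocoefs p) i.

Definition ozero : opoly := mkop [::].

Definition oadd (p q : opoly) : opoly :=
  mkop [seq ocoef p i + ocoef q i | i <- iota 0 (maxn (size (ocoefs p)) (size (ocoefs q)))].

Definition oopp (p : opoly) : opoly := mkop [seq - x | x <- ocoefs p].

Variables (mul : R -> R -> R) (sigma delta : R -> R).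

Definition comp_word (w : seq bool) : R -> R :=
  foldr (fun b f => (if b then sigma else delta) \o f) id w.

(* pi_i^m : sum of all binom(m,i) compositions of i copies of sigma and
   m-i copies of delta (an empty sum, i.e. 0, when i > m) *)
Definition pi_op (m i : nat) (x : R) : R :=
  \sum_(w : m.-tuple bool | count id w == i) comp_word w x.

(* biadditive extension of (r X^m)(s X^n) = sum_i (r pi_i^m(s)) X^(i+n):
   the coefficient of X^k is sum_m sum_(n <= k) p_m pi_(k-n)^m (q_n) *)
Definition omul (p q : opoly) : opoly :=
  mkop [seq \sum_(m < size (ocoefs p)) \sum_(n < k.+1)
              mul (ocoef p m) (pi_op m (k - n) (ocoef q n))
        | k <- iota 0 (size (ocoefs p) + size (ocoefs q))].

End Ore.

From mathcomp Require Import all_boot all_algebra zify.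
Set Implicit Arguments. Unset Strict Implicit. Unset Printing Implicit Defensive.
Import GRing.Theory.
Local Open Scope ring_scope.

(* For a right ideal J of R[X; sigma, delta] let L_d(J) (coef_ideal J d) be the
   set of d-th coefficients of the elements of J of degree at most d. It is a
   right ideal of R: for deg f <= d the d-th coefficient of f r is
   f_d sigma^d(r), since only the word sigma^d contributes, and sigma^d is onto.
   Multiplication by X shifts coefficients (sigma 1 = 1, delta 1 = 0), so L_d(J)
   grows with d; it also grows with J. By induction on the degree, J <= J' and
   L_d(J') <= L_d(J) for all d force J' <= J. For an ascending chain (J_k), the
   ACC for the diagonal chain (L_k(J_k))_k, stable from some N0, and for the
   finitely many chains (L_d(J_k))_k with d <= N0 makes all the L_d(J_k) stable
   from a common N, hence (J_k) is stable from N. *)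

Lemma additive0 (R : zmodType) (f : R -> R) :
  (forall x y, f (x + y) = f x + f y) -> f 0 = 0.
Proof. by move=> fD; apply: (addrI (f 0)); rewrite -fD !addr0. Qed.

Lemma iter_surjective (T : Type) (f : T -> T) :
  (forall y, exists x, f x = y) -> forall n y, exists x, iter n f x = y.
Proof.
move=> f_surj; elim=> [|n IHn] y; first by exists y.
have [z <-] := f_surj y; have [x <-] := IHn z; by exists x.
Qed.

Lemma sum_ord_only (V : zmodType) (G : nat -> V) (N j : nat) :
  (forall i, i != j -> G i = 0) -> ((N <= j)%N -> G j = 0) ->
  \sum_(i < N) G i = G j.
Proof.
move=> Gi0 Gj0.
rewrite (eq_bigr (fun i : 'I_N => if i == j :> nat then G i else 0)).
  by rewrite -big_mkcond big_ord1_eq; case: ltnP => // /Gj0.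
by move=> i _; case: eqP => // /eqP/Gi0.
Qed.

Section Coefficients.
Variable R : zmodType.
Implicit Types (s t : seq R) (p q : opoly R).

Lemma nth_trim s i : nth 0 (trim s) i = nth 0 s i.
Proof.
elim: s i => [|x s IHs] i //=.
case: ifP => [/andP[/eqP trim0 /eqP ->]|_]; last by case: i.
by case: i => [|i] //=; rewrite -IHs trim0 nth_nil.
Qed.

Lemma ocoef_mkop s i : ocoef (mkop s) i = nth 0 s i.
Proof. exact: nth_trim. Qed.

Lemma ocoef_default p i : (size (ocoefs p) <= i)%N -> ocoef p i = 0.
Proof. exact: nth_default. Qed.

Lemma size_wf_le s t : (t == [::]) || (last 0 t != 0) ->
  (forall i, nth 0 s i = nth 0 t i) -> (size t <= size s)%N.
Proof.
case: t => [|y t] //= /negP t_wf st; rewrite leqNgt; apply/negP => lt_st.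
by apply: t_wf; rewrite (last_nth 0) /= -st nth_default.
Qed.

Lemma opoly_eq p q : (forall i, ocoef p i = ocoef q i) -> p = q.
Proof.
case: p q => [s s_wf] [t t_wf]; rewrite /ocoef /= => st.
have eq_st : s = t.
  apply: (@eq_from_nth _ 0) => [|i _]; last exact: st.
  by apply/eqP; rewrite eqn_leq !size_wf_le // => i; rewrite st.
by subst t; congr OPoly; apply: bool_irrelevance.
Qed.

Lemma ocoef_ozero i : ocoef (ozero R) i = 0.
Proof. by rewrite ocoef_mkop nth_nil. Qed.

Lemma ocoef_oadd p q i : ocoef (oadd p q) i = ocoef p i + ocoef q i.
Proof.
rewrite ocoef_mkop.
case: (ltnP i (maxn (size (ocoefs p)) (size (ocoefs q)))) => [lt_i|].
  by rewrite (nth_map 0%N) ?size_iota // nth_iota.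
rewrite geq_max => /andP[le_p le_q].
rewrite nth_default ?size_map ?size_iota ?geq_max ?le_p //.
by rewrite !ocoef_default ?addr0.
Qed.

Lemma ocoef_oopp p i : ocoef (oopp p) i = - ocoef p i.
Proof.
rewrite ocoef_mkop; case: (ltnP i (size (ocoefs p))) => [lt_i|le_i].
  by rewrite (nth_map 0).
by rewrite nth_default ?size_map // ocoef_default ?oppr0.
Qed.

End Coefficients.

Section Pi.
Variables (R : zmodType) (sigma delta : R -> R).
Hypothesis sigmaD : forall x y, sigma (x + y) = sigma x + sigma y.
Hypothesis deltaD : forall x y, delta (x + y) = delta x + delta y.
Local Notation comp_word := (comp_word sigma delta).
Local Notation pi_op := (pi_op sigma delta).

Lemma comp_word0 w : comp_word w 0 = 0.
Proof. by elim: w => [|[] w IHw] //=; rewrite IHw additive0. Qed.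

Lemma pi_op0 m i : pi_op m i 0 = 0.
Proof. by apply: big1 => w _; rewrite comp_word0. Qed.

Lemma pi_op_gt m i x : (m < i)%N -> pi_op m i x = 0.
Proof.
move=> lt_mi; apply: big1 => w /eqP count_w.
by have := count_size id w; rewrite count_w size_tuple leqNgt lt_mi.
Qed.

Lemma comp_word_nseq_true n x : comp_word (nseq n true) x = iter n sigma x.
Proof. by elim: n => [|n IHn] //=; rewrite IHn. Qed.

Lemma pi_op_diag m x : pi_op m m x = iter m sigma x.
Proof.
rewrite /pi_op (big_pred1 [tuple of nseq m true]) ?comp_word_nseq_true // => w.
rewrite /= -val_eqE /=; case: w => s /= /eqP <-.
by rewrite -all_count; elim: s => [|[] s IHs] //=; rewrite eqseq_cons.
Qed.

Variable one : R.
Hypothesis sigma1 : sigma one = one.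
Hypothesis delta1 : delta one = 0.

Lemma comp_word_one w : comp_word w one = if all id w then one else 0.
Proof.
elim: w => [|[] w IHw] //=; rewrite IHw; case: (all id w) => //=;
  exact: additive0.
Qed.

Lemma pi_op_one m i : pi_op m i one = if i == m then one else 0.
Proof.
case: eqP => [->|ne_im].
  by rewrite pi_op_diag; elim: m => //= m ->.
apply: big1 => w /eqP count_w.
rewrite comp_word_one all_count count_w size_tuple.
by case: eqP.
Qed.

End Pi.

Section OreProduct.
Variables (R : zmodType) (mul : R -> R -> R) (sigma delta : R -> R).
Hypothesis sigmaD : forall x y, sigma (x + y) = sigma x + sigma y.
Hypothesis deltaD : forall x y, delta (x + y) = delta x + delta y.
Hypothesis mulr0 : forall x, mul x 0 = 0.
Hypothesis mul0r : forall x, mul 0 x = 0.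
Local Notation omul := (omul mul sigma delta).
Local Notation pi_op := (pi_op sigma delta).
Implicit Types (p q : opoly R) (r : R).

Definition deg_le (p : opoly R) (n : nat) :=
  forall j, (n < j)%N -> ocoef p j = 0.

Definition oC (r : R) : opoly R := mkop [:: r].

Lemma ocoef_omul p q k :
  ocoef (omul p q) k = \sum_(m < size (ocoefs p)) \sum_(n < k.+1)
    mul (ocoef p m) (pi_op m (k - n) (ocoef q n)).
Proof.
rewrite ocoef_mkop.
case: (ltnP k (size (ocoefs p) + size (ocoefs q))) => [lt_k|le_k].
  by rewrite (nth_map 0%N) ?size_iota // nth_iota.
rewrite nth_default ?size_map ?size_iota //; symmetry.
apply: big1 => m _; apply: big1 => n _.
have [lt_nq|le_qn] := ltnP n (size (ocoefs q)); last first.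
  by rewrite (ocoef_default le_qn) pi_op0 ?mulr0.
by rewrite pi_op_gt ?mulr0 //; have := ltn_ord m; lia.
Qed.

Lemma ocoef_omulC p r n k : deg_le p n -> (n <= k)%N ->
  ocoef (omul p (oC r)) k = mul (ocoef p k) (iter k sigma r).
Proof.
move=> deg_p le_nk; rewrite ocoef_omul.
under eq_bigr => m _.
  rewrite big_ord_recl big1 => [|i _]; last first.
    by rewrite ocoef_mkop lift0 /= nth_nil pi_op0 ?mulr0.
  rewrite addr0 subn0 ocoef_mkop /=.
over.
rewrite (@sum_ord_only _ (fun m => mul (ocoef p m) (pi_op m k r)) _ k) /=.
- by rewrite pi_op_diag.
- move=> m; rewrite neq_ltn => /orP[lt_mk|lt_km].
    by rewrite pi_op_gt ?mulr0.
  by rewrite deg_p ?mul0r //; apply: leq_ltn_trans lt_km.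
- by move=> le_pk; rewrite ocoef_default ?mul0r.
Qed.

Variable one : R.
Hypothesis sigma1 : sigma one = one.
Hypothesis delta1 : delta one = 0.
Hypothesis mulr1 : forall x, mul x one = x.

Definition oX : opoly R := mkop [:: 0; one].

Lemma ocoef_omulX p k :
  ocoef (omul p oX) k = if k is k'.+1 then ocoef p k' else 0.
Proof.
rewrite ocoef_omul; case: k => [|k].
  by apply: big1 => m _; rewrite big_ord1 ocoef_mkop pi_op0 ?mulr0.
under eq_bigr => m _.
  rewrite 2!big_ord_recl big1 => [|i _]; last first.
    by rewrite ocoef_mkop !lift0 /= nth_nil pi_op0 ?mulr0.
  rewrite !ocoef_mkop !lift0 /= pi_op0 // mulr0 add0r addr0 subSS subn0.
  rewrite pi_op_one //.
over.
rewrite (@sum_ord_only _ (fun m => mul (ocoef p m) (if k == m then one else 0))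
  _ k) /=.
- by rewrite eqxx mulr1.
- by move=> m /negbTE; rewrite eq_sym => ->; rewrite mulr0.
- by move=> le_pk; rewrite ocoef_default ?mul0r.
Qed.

End OreProduct.

Section Chains.
Variable S : Type.
Implicit Types I : nat -> S -> Prop.

Definition ascending I := forall n x, I n x -> I n.+1 x.

Definition stable_from I N := forall n, (N <= n)%N -> forall x, I n x -> I N x.

Lemma ascending_sub I : ascending I ->
  forall m n, (m <= n)%N -> forall x, I m x -> I n x.
Proof.
move=> I_asc m n le_mn.
apply: (@homo_leq _ I (fun A B => forall x, A x -> B x)) => //.
by move=> A B C AB BC x /AB /BC.
Qed.

Lemma stable_fromW I N M : ascending I -> (N <= M)%N ->
  stable_from I N -> stable_from I M.
Proof.
move=> I_asc le_NM I_stable n le_Mn x /(I_stable n (leq_trans le_NM le_Mn)).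
exact: ascending_sub.
Qed.

Variables (zero : S) (add : S -> S -> S) (opp : S -> S) (mul : S -> S -> S).
Hypothesis noeth : right_noetherian zero add opp mul.

Lemma noetherian_stable I : (forall n, right_ideal zero add opp mul (I n)) ->
  ascending I -> exists N, stable_from I N.
Proof.
move=> I_ideal I_asc; have [N I_N] := noeth I_ideal I_asc.
by exists N => n le_Nn x /I_N; apply.
Qed.

Variable A : nat -> nat -> S -> Prop.
Hypothesis A_ideal : forall k d, right_ideal zero add opp mul (A k d).
Hypothesis A_asc_k : forall d, ascending (A^~ d).
Hypothesis A_asc_d : forall k, ascending (A k).

Lemma noetherian_stable_upto K :
  exists M, forall d, (d <= K)%N -> stable_from (A^~ d) M.
Proof.
elim: K => [|K [M M_stable]].
  have [M M_stable] := noetherian_stable (fun k => A_ideal k 0) (@A_asc_k 0).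
  by exists M => d; rewrite leqn0 => /eqP ->.
have [M' M'_stable] :=
  noetherian_stable (fun k => A_ideal k K.+1) (@A_asc_k K.+1).
exists (maxn M M') => d; rewrite leq_eqVlt ltnS => /orP[/eqP->|le_dK].
  exact: stable_fromW (@A_asc_k _) (leq_maxr _ _) M'_stable.
exact: stable_fromW (@A_asc_k _) (leq_maxl _ _) (M_stable d le_dK).
Qed.

Lemma noetherian_stable2 : exists N, forall d, stable_from (A^~ d) N.
Proof.
have A_diag_asc : ascending (fun k => A k k).
  by move=> k x /A_asc_k /A_asc_d.
have A_sub k k' d d' :
    (k <= k')%N -> (d <= d')%N -> forall x, A k d x -> A k' d' x.
  move=> le_k le_d x /(ascending_sub (@A_asc_d k) le_d).
  exact: (ascending_sub (@A_asc_k d') le_k).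
have [N0 diag_stable] := noetherian_stable (fun k => A_ideal k k) A_diag_asc.
have [M M_stable] := noetherian_stable_upto N0.
exists (maxn N0 M) => d; have [le_dN0|lt_N0d] := leqP d N0.
  exact: stable_fromW (@A_asc_k _) (leq_maxr _ _) (M_stable d le_dN0).
move=> n; rewrite geq_max => /andP[le_N0n _] x Anx.
have /diag_stable : A (maxn d n) (maxn d n) x.
  by apply: A_sub Anx; rewrite ?leq_maxl ?leq_maxr.
move=> /(_ (leq_trans le_N0n (leq_maxr _ _))).
by apply: A_sub; [exact: leq_maxl | exact: ltnW].
Qed.

End Chains.

Section CoefficientIdeals.
Variables (R : zmodType) (mul : R -> R -> R) (one : R) (sigma delta : R -> R).
Hypothesis sigmaD : forall x y, sigma (x + y) = sigma x + sigma y.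
Hypothesis sigma_surj : forall y, exists x, sigma x = y.
Hypothesis sigma1 : sigma one = one.
Hypothesis deltaD : forall x y, delta (x + y) = delta x + delta y.
Hypothesis delta1 : delta one = 0.
Hypothesis mulr0 : forall x, mul x 0 = 0.
Hypothesis mul0r : forall x, mul 0 x = 0.
Hypothesis mulr1 : forall x, mul x one = x.
Local Notation omul := (omul mul sigma delta).
Local Notation ore_ideal := (right_ideal (ozero R) (@oadd R) (@oopp R) omul).

Definition coef_ideal (J : opoly R -> Prop) (d : nat) (a : R) :=
  exists f, [/\ J f, deg_le f d & ocoef f d = a].

Lemma coef_ideal_right_ideal J d :
  ore_ideal J -> right_ideal 0 +%R -%R mul (coef_ideal J d).
Proof.
case=> J0 [JD [JN JM]]; split; [|split; [|split]].
- by exists (ozero R); split=> [|j _|]; rewrite ?ocoef_ozero.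
- move=> _ _ [f [Jf deg_f <-]] [g [Jg deg_g <-]].
  exists (oadd f g); split; rewrite ?ocoef_oadd //; first exact: JD.
  by move=> j lt_dj; rewrite ocoef_oadd deg_f ?deg_g ?addr0.
- move=> _ [f [Jf deg_f <-]].
  exists (oopp f); split; rewrite ?ocoef_oopp //; first exact: JN.
  by move=> j lt_dj; rewrite ocoef_oopp deg_f ?oppr0.
- move=> _ s [f [Jf deg_f <-]].
  have [r <-] := iter_surjective sigma_surj d s.
  have coef_fr := ocoef_omulC sigmaD deltaD mulr0 mul0r r deg_f.
  exists (omul f (oC r)); split; [exact: JM | move=> j lt_dj | exact: coef_fr].
  by rewrite coef_fr ?deg_f ?mul0r // ltnW.
Qed.

Lemma coef_idealS J d :
  ore_ideal J -> forall a, coef_ideal J d a -> coef_ideal J d.+1 a.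
Proof.
case=> _ [_ [_ JM]] _ [f [Jf deg_f <-]]; exists (omul f (oX one)).
split; first exact: JM.
  by case=> // j lt_dj; rewrite ocoef_omulX ?deg_f.
by rewrite ocoef_omulX.
Qed.

Lemma sub_of_coef_ideal_sub (J J' : opoly R -> Prop) :
  ore_ideal J -> ore_ideal J' -> (forall f, J f -> J' f) ->
  (forall d a, coef_ideal J' d a -> coef_ideal J d a) ->
  forall f, J' f -> J f.
Proof.
move=> [J0 [JD [JN _]]] [_ [J'D [J'N _]]] JJ' coefJ'J.
suff J_of_J' d f : J' f -> (forall j, (d <= j)%N -> ocoef f j = 0) -> J f.
  move=> f J'f; apply: (J_of_J' (size (ocoefs f))) => // j.
  exact: ocoef_default.
elim: d f => [|d IHd] f J'f f_vanish.
  suff -> : f = ozero R by [].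
  by apply: opoly_eq => j; rewrite ocoef_ozero f_vanish.
have [g [Jg deg_g g_d]] : coef_ideal J d (ocoef f d).
  by apply: coefJ'J; exists f; split=> // j; apply: f_vanish.
have J_fg : J (oadd f (oopp g)).
  apply: IHd; first by apply: J'D => //; apply/J'N/JJ'.
  move=> j; rewrite leq_eqVlt => /orP[/eqP<-|lt_dj].
    by rewrite ocoef_oadd ocoef_oopp g_d subrr.
  by rewrite ocoef_oadd ocoef_oopp f_vanish // deg_g // subrr.
have -> : f = oadd (oadd f (oopp g)) g.
  by apply: opoly_eq => j; rewrite !ocoef_oadd ocoef_oopp subrK.
exact: JD.
Qed.

Lemma ore_right_noetherian : right_noetherian 0 +%R -%R mul ->
  right_noetherian (ozero R) (@oadd R) (@oopp R) omul.
Proof.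
move=> noethR I I_ideal I_asc.
have [|||N N_stable] :=
  noetherian_stable2 noethR (A := fun k d => coef_ideal (I k) d).
- by move=> k d; apply: coef_ideal_right_ideal.
- by move=> d k a [f [If fd fa]]; exists f; split=> //; apply: I_asc.
- by move=> k d; apply: coef_idealS.
exists N => n le_Nn f; split; last exact: ascending_sub.
apply: sub_of_coef_ideal_sub => //; first exact: ascending_sub.
by move=> d a; apply: N_stable.
Qed.

End CoefficientIdeals.

Theorem theorem13 (R : zmodType) (mul : R -> R -> R) (one : R)
  (sigma delta : R -> R) :
  is_naring 0 one +%R -%R mul ->
  (forall x y, sigma (x + y) = sigma x + sigma y) ->
  (forall y, exists x, sigma x = y) ->
  sigma one = one ->
  (forall x y, delta (x + y) = delta x + delta y) ->
  delta one = 0 ->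
  right_noetherian 0 +%R -%R mul ->
  right_noetherian (ozero R) (@oadd R) (@oopp R) (omul mul sigma delta).
Proof.
move=> [_ [_ [_ [_ [mulrDr [mulrDl [_ mulr1]]]]]]] sigmaD sigma_surj sigma1.
move=> deltaD delta1.
have mulr0 x : mul x 0 = 0 := additive0 (mulrDr x).
have mul0r x : mul 0 x = 0 := additive0 (fun a b => mulrDl a b x).
exact: (@ore_right_noetherian _ _ one).
Qed.
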